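(* Let $a,b,d>0$, let $c_-$ be the unique negative zero of $Q(x)=4ax^3-b^2x^2-18abd\,x+27a^2d^2+4db^3$, let $c^*=-\sqrt{3bd}$, and assume $c\in(c_-,c^* )$. Let $\phi(x)=\frac{ax^3+bx^2+cx+d}{x^3}$ ($x>0$), $x_m=\frac{-c-\sqrt{c^2-3bd}}{b}$, $x_M=\frac{-c+\sqrt{c^2-3bd}}{b}$. Assume $\phi$ has a unique equilibrium $\overline{t}$ with $\overline{t}<x_m$, and let $\{t_n\}_{n\ge0}$ be a positive solution of $t_{n+1}=\phi(t_n)$. Let $c_1^*=-2\sqrt{bd}$; when $c>c_1^*$ let $\eta=\frac{-dx_m}{cx_m+2d}$ (the unique $\eta>x_M$ with $\phi(\eta)=\phi(x_m)$). Let $I=[\phi(x_m),\phi^2(x_m)]$. \begin{description} \item[(a)] Under the hypothesis (H): ''either $c\leq c_1^*$, or $c>c_1^*$ and $\phi^2(x_m)\leq\eta$'', the interval $I$ is invariant, i.e. $\phi(I)\subseteq I$. Moreover, if $c\leq c_1^*$ then every positive solution eventually enters $I$ (and stays there). \item[(b)] If $\phi$ has no 2-cycle, then $\{t_n\}$ converges to $\overline{t}$. \item[(c)] Assume $\phi$ has exactly one 2-cycle $(p,q)$ with $p<\overline{t}<q\leq x_m$. Let $\mathcal{S}=\bigcup_{n\ge0}\phi^{-n}(\overline{t})=\{t>0:\phi^n(t)=\overline{t}\text{ for some }n\ge0\}$. If $\overline{t}<-dx_M/(cx_M+2d)$ then $\mathcal{S}=\{\overline{t}\}$. Also, if $t_0\notin\mathcal{S}$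 then $\{t_n\}$ converges to the 2-cycle $(p,q)$; otherwise it converges to $\overline{t}$. \end{description}
   Context: $x_m<x_M$ are the local minimum and local maximum points of $\phi$; $\phi^n$ denotes the $n$-th iterate. An equilibrium is $t>0$ with $\phi(t)=t$. A 2-cycle is a pair $(p,q)$ of positive numbers with $p\ne q$, $\phi(p)=q$, $\phi(q)=p$. A positive solution is a sequence with $t_0>0$ and $t_{n+1}=\phi(t_n)$. The sequence $\{t_n\}$ converges to the 2-cycle $(p,q)$ if one of the subsequences $\{t_{2n}\}$, $\{t_{2n+1}\}$ converges to $p$ and the other to $q$. *)

From Stdlib Require Import Reals Lra.
Open Scope R_scope.

Definition phi (a b c d x : R) : R := (a * x ^ 3 + b * x ^ 2 + c * x + d) / x ^ 3.

Definition Qpoly (a b d x : R) : R :=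
  4 * a * x ^ 3 - b ^ 2 * x ^ 2 - 18 * a * b * d * x + 27 * a ^ 2 * d ^ 2 + 4 * d * b ^ 3.

(* x_m and x_M, the local minimum / maximum points of phi *)
Definition x_m (b c d : R) : R := (- c - sqrt (c ^ 2 - 3 * b * d)) / b.
Definition x_M (b c d : R) : R := (- c + sqrt (c ^ 2 - 3 * b * d)) / b.

Definition iter (n : nat) (f : R -> R) (x : R) : R := Nat.iter n f x.

Definition is_equilibrium (f : R -> R) (t : R) : Prop := 0 < t /\ f t = t.

Definition is_2cycle (f : R -> R) (p q : R) : Prop :=
  0 < p /\ 0 < q /\ p <> q /\ f p = q /\ f q = p.

Definition positive_solution (f : R -> R) (t : nat -> R) : Prop :=
  0 < t O /\ forall n, t (S n) = f (t n).

Definition converges_to_2cycle (t : nat -> R) (p q : R) : Prop :=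
  (Un_cv (fun n => t (2 * n)%nat) p /\ Un_cv (fun n => t (2 * n + 1)%nat) q) \/
  (Un_cv (fun n => t (2 * n)%nat) q /\ Un_cv (fun n => t (2 * n + 1)%nat) p).

Definition in_preimage_set (f : R -> R) (tbar t : R) : Prop :=
  0 < t /\ exists n : nat, iter n f t = tbar.

(* With [u = 1/x] one has [phi x = P u] for the cubic [P u = a + b u + c u^2 + d u^3], so
   [phi] decreases on [(0, xm]], increases on [[xm, xM]] and decreases beyond.  Since
   [27 d^2 P(1/xm) P(1/xM) = Q(c)] and [Q > 0] on [(c_-, 0)], [phi xm > 0], so [phi] is
   bounded below by [min a (phi xm) > 0].  Uniqueness of the equilibrium gives
   [phi x < x] for [x > tbar], so a solution that stays above [tbar] decreases to [tbar].
   Otherwise, if [g = phi o phi] lies above the diagonal on [(0, z0)], every interval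
   [[x, phi x]] with [x < z0] is invariant; hence the last value of the solution below
   [tbar] increases, its limit is [z0], and the solution is squeezed.  With no 2-cycle
   [z0 = tbar]; in part (c) [z0 = p], and the negative Schwarzian of [phi], inherited by
   [g], forces [g' >= 1] between the two points of [(p, q)] where [g' = 1], so that [g]
   lies below the diagonal on [(p, tbar)]. *)

From Stdlib Require Import Reals Lra Lia Ranalysis5 Classical.
From Coquelicot Require Coquelicot.
Open Scope R_scope.

(** * Real-analysis preliminaries *)

Lemma continuity_pt_id_minus (F : R -> R) (x : R) :
  continuity_pt F x -> continuity_pt (fun y => y - F y) x.
Proof.
  intros hF. change (continuity_pt (minus_fct id F) x).
  apply continuity_pt_minus; [apply derivable_continuous_pt, derivable_pt_id | exact hF].
Qed.

Lemma fixpoint_between (F : R -> R) (x y : R) :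
  x < y -> (forall z, x <= z <= y -> continuity_pt F z) ->
  x < F x -> F y < y -> exists z, x < z < y /\ F z = z.
Proof.
  intros hxy hF hx hy.
  destruct (IVT_interv (fun z => z - F z) x y) as [z [[hz1 hz2] hz]]; try lra.
  { intros z hz. apply continuity_pt_id_minus, hF, hz. }
  exists z. destruct hz1 as [hz1 | <-]; [|lra]. destruct hz2 as [hz2 | ->]; [|lra].
  split; [split|]; lra.
Qed.

Lemma derivable_pt_lim_neg_right (G : R -> R) (x l : R) :
  derivable_pt_lim G x l -> l < 0 ->
  exists e, 0 < e /\ forall y, x < y < x + e -> G y < G x.
Proof.
  intros hG hl. destruct (hG (- l / 2)) as [[e he] hde]; [lra|].
  exists e. split; [exact he|]. intros y hy.
  specialize (hde (y - x) ltac:(lra) ltac:(rewrite Rabs_right; simpl; lra)).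
  replace (x + (y - x)) with y in hde by ring.
  assert (hq : (G y - G x) / (y - x) < 0).
  { apply Rabs_def2 in hde. lra. }
  assert (G y - G x = (G y - G x) / (y - x) * (y - x)) as E by (field; lra).
  assert (0 < y - x) by lra. nra.
Qed.

(* [2 F F'' - 3 F'^2] is the numerator of the Schwarzian derivative of an antiderivative
   of [F].  At an interior minimum [F' = 0], so [F'' < 0] and [F] would decrease to its
   right. *)
Lemma neg_schwarzian_min_at_ends (F F' F'' : R -> R) (r1 r2 : R) :
  r1 < r2 ->
  (forall x, r1 <= x <= r2 -> derivable_pt_lim F x (F' x)) ->
  (forall x, r1 <= x <= r2 -> derivable_pt_lim F' x (F'' x)) ->
  (forall x, r1 < x < r2 -> 0 < F x) ->
  (forall x, r1 < x < r2 -> 2 * F x * F'' x - 3 * F' x ^ 2 < 0) ->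
  forall x, r1 <= x <= r2 -> Rmin (F r1) (F r2) <= F x.
Proof.
  intros hr hF hF' hpos hS x hx.
  destruct (continuity_ab_min F r1 r2) as [r [hmin hr12]]; [lra| |].
  { intros y hy. apply (derivable_continuous_pt F y (exist _ _ (hF y hy))). }
  destruct (Rle_dec (Rmin (F r1) (F r2)) (F r)) as [hle | hlt].
  { specialize (hmin x hx). lra. }
  exfalso.
  assert (hr' : r1 < r < r2).
  { assert (r <> r1) by (intros ->; pose proof (Rmin_l (F r1) (F r2)); lra).
    assert (r <> r2) by (intros ->; pose proof (Rmin_r (F r1) (F r2)); lra).
    destruct hr12 as [[h1 | h1] [h2 | h2]]; subst; split; lra. }
  assert (hcrit : F' r = 0).
  { rewrite <- (derive_pt_eq_0 F r (F' r) (exist _ _ (hF r ltac:(lra))) (hF r ltac:(lra))).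
    apply (deriv_minimum F r1 r2); try lra. intros y hy1 hy2. apply hmin. lra. }
  assert (hF''r : F'' r < 0).
  { specialize (hS r hr'). specialize (hpos r hr'). rewrite hcrit in hS. nra. }
  destruct (derivable_pt_lim_neg_right F' r (F'' r) (hF' r ltac:(lra)) hF''r)
    as [e [he hdec]].
  set (y := r + Rmin e (r2 - r) / 2).
  assert (hy : r < y < r + e /\ y < r2).
  { unfold y. pose proof (Rmin_l e (r2 - r)). pose proof (Rmin_r e (r2 - r)).
    assert (0 < Rmin e (r2 - r)) by (apply Rmin_pos; lra). lra. }
  destruct (MVT_cor2 F F' r y) as [xi [hxi1 hxi2]]; [lra| |].
  { intros z hz. apply hF. lra. }
  specialize (hdec xi ltac:(lra)). rewrite hcrit in hdec.
  specialize (hmin y ltac:(lra)). nra.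
Qed.

Lemma Un_cv_eventually_lt (u : nat -> R) (l m : R) :
  Un_cv u l -> l < m -> exists N, forall n, (N <= n)%nat -> u n < m.
Proof.
  intros hu hm. destruct (hu (m - l)) as [N hN]; [lra|]. exists N. intros n hn.
  specialize (hN n hn). unfold Rdist in hN. apply Rabs_def2 in hN. lra.
Qed.

Lemma Un_cv_eventually_gt (u : nat -> R) (l m : R) :
  Un_cv u l -> m < l -> exists N, forall n, (N <= n)%nat -> m < u n.
Proof.
  intros hu hm. destruct (hu (l - m)) as [N hN]; [lra|]. exists N. intros n hn.
  specialize (hN n hn). unfold Rdist in hN. apply Rabs_def2 in hN. lra.
Qed.

Lemma Un_cv_le_bound (u : nat -> R) (l B : R) :
  Un_cv u l -> (forall n, u n <= B) -> l <= B.
Proof.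
  intros hu hB. apply Rnot_lt_le. intros hlt.
  destruct (Un_cv_eventually_gt u l B hu hlt) as [N hN]. specialize (hN N (le_n N)).
  specialize (hB N). lra.
Qed.

Lemma Un_cv_ge_bound (u : nat -> R) (l B : R) :
  Un_cv u l -> (forall n, B <= u n) -> B <= l.
Proof.
  intros hu hB. apply Rnot_lt_le. intros hlt.
  destruct (Un_cv_eventually_lt u l B hu hlt) as [N hN]. specialize (hN N (le_n N)).
  specialize (hB N). lra.
Qed.

Lemma Un_cv_squeeze (u v w : nat -> R) (l : R) :
  Un_cv u l -> Un_cv w l -> (forall n, u n <= v n <= w n) -> Un_cv v l.
Proof.
  intros hu hw huvw e he. destruct (hu e he) as [N1 h1]. destruct (hw e he) as [N2 h2].
  exists (max N1 N2). intros n hn. specialize (h1 n ltac:(lia)). specialize (h2 n ltac:(lia)).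
  specialize (huvw n). unfold Rdist in *. apply Rabs_def2 in h1, h2. apply Rabs_def1; lra.
Qed.

Lemma Un_cv_arith_subseq (u : nat -> R) (l : R) (M : nat) :
  Un_cv u l -> Un_cv (fun k => u (M + 2 * k)%nat) l.
Proof.
  intros hu e he. destruct (hu e he) as [N hN]. exists N. intros n hn. apply hN. lia.
Qed.

Lemma Un_cv_decreasing_bounded (u : nat -> R) (B : R) :
  (forall n, u (S n) <= u n) -> (forall n, B <= u n) ->
  exists l, Un_cv u l /\ B <= l /\ forall n, l <= u n.
Proof.
  intros hdec hB. destruct (decreasing_cv u hdec) as [l hl].
  { exists (- B). intros x [i ->]. unfold opp_seq. specialize (hB i). lra. }
  exists l. split; [exact hl|]. split.
  - exact (Un_cv_ge_bound u l B hl hB).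
  - exact (decreasing_ineq u l hdec hl).
Qed.

Lemma Un_cv_increasing_bounded (u : nat -> R) (B : R) :
  (forall n, u n <= u (S n)) -> (forall n, u n <= B) ->
  exists l, Un_cv u l /\ l <= B /\ forall n, u n <= l.
Proof.
  intros hinc hB. destruct (growing_cv u hinc) as [l hl].
  { exists B. intros x [i ->]. apply hB. }
  exists l. split; [exact hl|]. split.
  - exact (Un_cv_le_bound u l B hl hB).
  - exact (growing_ineq u l hinc hl).
Qed.

Lemma Un_cv_orbit_fixpoint (F : R -> R) (u : nat -> R) (l : R) :
  Un_cv u l -> (forall n, u (S n) = F (u n)) -> continuity_pt F l -> F l = l.
Proof.
  intros hu hs hc. apply (UL_sequence (fun n => u (n + 1)%nat)).
  - apply (Un_cv_ext (fun n => F (u n))).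
    + intros n. rewrite Nat.add_1_r. symmetry. apply hs.
    + apply continuity_seq; assumption.
  - apply CV_shift'. exact hu.
Qed.

Lemma converges_to_2cycle_of_shift (t : nat -> R) (p q : R) (N : nat) :
  Un_cv (fun k => t (N + 2 * k)%nat) p -> Un_cv (fun k => t (N + 2 * k + 1)%nat) q ->
  converges_to_2cycle t p q.
Proof.
  intros hp hq. destruct (Nat.Even_or_Odd N) as [[M ->] | [M ->]].
  - left. split.
    + apply (CV_shift _ M). apply (Un_cv_ext (fun k => t (2 * M + 2 * k)%nat)); [|exact hp].
      intros n. f_equal. lia.
    + apply (CV_shift _ M). apply (Un_cv_ext (fun k => t (2 * M + 2 * k + 1)%nat)); [|exact hq].
      intros n. f_equal. lia.
  - right. split.
    + apply (CV_shift _ (S M)).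
      apply (Un_cv_ext (fun k => t (2 * M + 1 + 2 * k + 1)%nat)); [|exact hq].
      intros n. f_equal. lia.
    + apply (CV_shift _ M). apply (Un_cv_ext (fun k => t (2 * M + 1 + 2 * k)%nat)); [|exact hp].
      intros n. f_equal. lia.
Qed.

Definition frequently_below (t : nat -> R) (m : R) : Prop :=
  forall N, exists n, (N <= n)%nat /\ t n < m.

Lemma frequently_below_or_eventually_ge (t : nat -> R) (m : R) :
  frequently_below t m \/ exists N, forall n, (N <= n)%nat -> m <= t n.
Proof.
  destruct (classic (frequently_below t m)) as [h | h]; [left; exact h | right].
  apply not_all_ex_not in h. destruct h as [N hN]. exists N. intros n hn.
  destruct (Rlt_dec (t n) m); [|lra]. exfalso. apply hN. exists n. split; assumption.
Qed.

Lemma frequently_below_shift (t : nat -> R) (m : R) (N0 : nat) :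
  frequently_below t m -> frequently_below (fun n => t (n + N0)%nat) m.
Proof.
  intros h N. destruct (h (N + N0)%nat) as [n [h1 h2]]. exists (n - N0)%nat.
  split; [lia|]. replace (n - N0 + N0)%nat with n by lia. exact h2.
Qed.

Lemma positive_solution_iter (F : R -> R) (t : nat -> R) :
  positive_solution F t -> forall n, iter n F (t O) = t n.
Proof.
  intros [_ hs] n. induction n as [|n IH]; [reflexivity|].
  unfold iter in *. simpl. rewrite IH. symmetry. apply hs.
Qed.

Lemma Rinv_lt (x y : R) : 0 < x -> x < y -> / y < / x.
Proof. intros. apply Rinv_lt_contravar; nra. Qed.

Lemma Rinv_le (x y : R) : 0 < x -> x <= y -> / y <= / x.
Proof. intros. apply Rinv_le_contravar; lra. Qed.

Lemma continuity_pt_locally_lt (F : R -> R) (x m : R) :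
  continuity_pt F x -> F x < m -> exists e, 0 < e /\ forall y, Rabs (y - x) < e -> F y < m.
Proof.
  intros hF hm. destruct (hF (m - F x)) as [e [he hde]]; [lra|].
  exists e. split; [exact he|]. intros y hy. destruct (Req_dec y x) as [-> | hyx]; [exact hm|].
  specialize (hde y (conj (conj I (not_eq_sym hyx)) hy)). simpl in hde. unfold Rdist in hde.
  apply Rabs_def2 in hde. lra.
Qed.

(* Chain rule for Schwarzian numerators: [u1, u2, u3] are the derivatives of the inner
   map at [x], [v1, v2, v3] those of the outer map at its image. *)
Lemma schwarzian_num_comp (u1 u2 u3 v1 v2 v3 : R) :
  2 * (v1 * u1) * (v3 * u1 ^ 3 + 3 * v2 * u1 * u2 + v1 * u3)
    - 3 * (v2 * (u1 * u1) + v1 * u2) ^ 2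
  = (2 * v1 * v3 - 3 * v2 ^ 2) * u1 ^ 4 + v1 ^ 2 * (2 * u1 * u3 - 3 * u2 ^ 2).
Proof. ring. Qed.

(** * Shape of [phi] *)

Definition dphi (b c d x : R) : R := - b / x ^ 2 - 2 * c / x ^ 3 - 3 * d / x ^ 4.
Definition d2phi (b c d x : R) : R := 2 * b / x ^ 3 + 6 * c / x ^ 4 + 12 * d / x ^ 5.
Definition d3phi (b c d x : R) : R := - 6 * b / x ^ 4 - 24 * c / x ^ 5 - 60 * d / x ^ 6.

Section PhiDerivatives.
Import Coquelicot.Coquelicot.

Lemma phi_derivative (a b c d x : R) :
  0 < x -> derivable_pt_lim (phi a b c d) x (dphi b c d x).
Proof.
  intros hx. apply is_derive_Reals. unfold phi, dphi. auto_derive.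
  - apply Rgt_not_eq. repeat apply Rmult_lt_0_compat; lra.
  - field. lra.
Qed.

Lemma dphi_derivative (b c d x : R) :
  0 < x -> derivable_pt_lim (dphi b c d) x (d2phi b c d x).
Proof.
  intros hx. apply is_derive_Reals. unfold dphi, d2phi. auto_derive.
  - repeat split; apply Rgt_not_eq; repeat apply Rmult_lt_0_compat; lra.
  - field. lra.
Qed.

Lemma d2phi_derivative (b c d x : R) :
  0 < x -> derivable_pt_lim (d2phi b c d) x (d3phi b c d x).
Proof.
  intros hx. apply is_derive_Reals. unfold d2phi, d3phi. auto_derive.
  - repeat split; apply Rgt_not_eq; repeat apply Rmult_lt_0_compat; lra.
  - field. lra.
Qed.

End PhiDerivatives.

Section Phi.
Variables a b c d : R.
Hypothesis hb : 0 < b.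
Hypothesis hd : 0 < d.
Hypothesis hc : c < 0.
Hypothesis hc3 : 3 * b * d < c ^ 2.

Local Notation f := (phi a b c d).
Local Notation xm := (x_m b c d).
Local Notation xM := (x_M b c d).

(* [phi x = P (1/x)]; the critical points [um = 1/xm] and [uM = 1/xM] of the
   cubic [P] are the roots of [P' u = b + 2 c u + 3 d u^2]. *)
Definition P (u : R) : R := a + b * u + c * u ^ 2 + d * u ^ 3.
Definition delta : R := sqrt (c ^ 2 - 3 * b * d).
Definition um : R := (- c + delta) / (3 * d).
Definition uM : R := (- c - delta) / (3 * d).

Lemma delta_pos : 0 < delta.
Proof. apply sqrt_lt_R0. lra. Qed.

Lemma delta_sqr : delta * delta = c ^ 2 - 3 * b * d.
Proof. apply sqrt_sqrt. lra. Qed.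

Lemma delta_lt_opp_c : delta < - c.
Proof. pose proof delta_pos. pose proof delta_sqr. nra. Qed.

Lemma uM_pos : 0 < uM.
Proof. pose proof delta_lt_opp_c. unfold uM. apply Rdiv_lt_0_compat; lra. Qed.

Lemma um_sub_uM : um - uM = 2 * delta / (3 * d).
Proof. unfold um, uM. field. lra. Qed.

Lemma uM_lt_um : uM < um.
Proof.
  pose proof um_sub_uM. pose proof delta_pos.
  assert (0 < 2 * delta / (3 * d)) by (apply Rdiv_lt_0_compat; lra). lra.
Qed.

Lemma um_critical : b + 2 * c * um + 3 * d * um ^ 2 = 0.
Proof. unfold um. pose proof delta_sqr. field_simplify_eq; [nra | lra]. Qed.

Lemma uM_critical : b + 2 * c * uM + 3 * d * uM ^ 2 = 0.
Proof. unfold uM. pose proof delta_sqr. field_simplify_eq; [nra | lra]. Qed.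

Lemma c_add_um : c + 3 * d * um = delta.
Proof. unfold um. field. lra. Qed.

Lemma c_add_uM : c + 3 * d * uM = - delta.
Proof. unfold uM. field. lra. Qed.

Definition P_slope (u v : R) : R := b + c * (u + v) + d * (u ^ 2 + u * v + v ^ 2).

Lemma P_sub (u v : R) : P u - P v = (u - v) * P_slope u v.
Proof. unfold P, P_slope. ring. Qed.

Lemma P_slope_um (A B : R) :
  P_slope (um + A) (um + B) = delta * (A + B) + d * (A ^ 2 + A * B + B ^ 2).
Proof.
  rewrite <- c_add_um. pose proof um_critical. unfold P_slope.
  transitivity ((b + 2 * c * um + 3 * d * um ^ 2) + (c + 3 * d * um) * (A + B)
    + d * (A ^ 2 + A * B + B ^ 2)); [ring | nra].
Qed.

Lemma P_slope_uM (A B : R) :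
  P_slope (uM + A) (uM + B) = - delta * (A + B) + d * (A ^ 2 + A * B + B ^ 2).
Proof.
  replace (- delta) with (c + 3 * d * uM) by apply c_add_uM. pose proof uM_critical.
  unfold P_slope.
  transitivity ((b + 2 * c * uM + 3 * d * uM ^ 2) + (c + 3 * d * uM) * (A + B)
    + d * (A ^ 2 + A * B + B ^ 2)); [ring | nra].
Qed.

Lemma P_sub_P_um (u : R) : P u - P um = (u - um) ^ 2 * (delta + d * (u - um)).
Proof.
  rewrite P_sub. pose proof (P_slope_um (u - um) 0) as E.
  replace (um + (u - um)) with u in E by ring. rewrite Rplus_0_r in E. rewrite E. ring.
Qed.

Lemma P_sub_P_uM (u : R) : P u - P uM = (u - uM) ^ 2 * (- delta + d * (u - uM)).
Proof.
  rewrite P_sub. pose proof (P_slope_uM (u - uM) 0) as E.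
  replace (uM + (u - uM)) with u in E by ring. rewrite Rplus_0_r in E. rewrite E. ring.
Qed.

Lemma P_increasing_right (u v : R) : um <= v -> v < u -> P v < P u.
Proof.
  intros hv hvu. pose proof delta_pos.
  assert (0 < P_slope u v).
  { replace u with (um + (u - um)) by ring. replace v with (um + (v - um)) by ring.
    rewrite P_slope_um. assert (0 <= (u - um) ^ 2 + (u - um) * (v - um) + (v - um) ^ 2) by nra.
    nra. }
  pose proof (P_sub u v). nra.
Qed.

Lemma P_increasing_left (u v : R) : v < u -> u <= uM -> P v < P u.
Proof.
  intros hvu hu. pose proof delta_pos.
  assert (0 < P_slope u v).
  { replace u with (uM + (u - uM)) by ring. replace v with (uM + (v - uM)) by ring.
    rewrite P_slope_uM. assert (0 <= (u - uM) ^ 2 + (u - uM) * (v - uM) + (v - uM) ^ 2) by nra.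
    nra. }
  pose proof (P_sub u v). nra.
Qed.

Lemma P_decreasing_mid (u v : R) : uM <= v -> v < u -> u <= um -> P u < P v.
Proof.
  intros hv hvu hu. pose proof delta_pos. pose proof um_sub_uM.
  assert (hk : 3 * d * (um - uM) = 2 * delta) by (rewrite um_sub_uM; field; lra).
  assert (P_slope u v < 0).
  { replace u with (um + - (um - u)) by ring. replace v with (um + - (um - v)) by ring.
    rewrite P_slope_um.
    assert ((um - u) ^ 2 + (um - u) * (um - v) + (um - v) ^ 2
              < 3 / 2 * (um - uM) * ((um - u) + (um - v))) by nra.
    nra. }
  pose proof (P_sub u v). nra.
Qed.

Lemma P_um_P_uM : 27 * d ^ 2 * P um * P uM = Qpoly a b d c.
Proof.
  unfold P, um, uM, Qpoly. pose proof delta_sqr.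
  replace b with ((c ^ 2 - delta * delta) / (3 * d)) by (field_simplify_eq; lra).
  field. lra.
Qed.

Lemma inv_xm : / xm = um.
Proof.
  unfold x_m. fold delta. pose proof delta_sqr. pose proof delta_lt_opp_c. unfold um.
  field_simplify_eq; [nra | repeat split; lra].
Qed.

Lemma inv_xM : / xM = uM.
Proof.
  unfold x_M. fold delta. pose proof delta_sqr. pose proof delta_lt_opp_c.
  pose proof delta_pos. unfold uM.
  field_simplify_eq; [nra | repeat split; lra].
Qed.

Lemma xm_pos : 0 < xm.
Proof. unfold x_m. fold delta. pose proof delta_lt_opp_c. apply Rdiv_lt_0_compat; lra. Qed.

Lemma xM_pos : 0 < xM.
Proof.
  unfold x_M. fold delta. pose proof delta_lt_opp_c. pose proof delta_pos.
  apply Rdiv_lt_0_compat; lra.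
Qed.

Lemma xm_lt_xM : xm < xM.
Proof.
  pose proof xm_pos. pose proof uM_pos. pose proof uM_lt_um.
  rewrite <- (Rinv_inv xm), <- (Rinv_inv xM), inv_xm, inv_xM.
  apply Rinv_lt_contravar; nra.
Qed.

Lemma phi_eq_P (x : R) : 0 < x -> f x = P (/ x).
Proof. intros hx. unfold phi, P. field. lra. Qed.

Lemma phi_decreasing_left (x y : R) : 0 < x -> x < y -> y <= xm -> f y < f x.
Proof.
  intros hx hxy hy. rewrite !phi_eq_P by lra. apply P_increasing_right.
  - rewrite <- inv_xm. apply Rinv_le; lra.
  - apply Rinv_lt; lra.
Qed.

Lemma phi_increasing_mid (x y : R) : xm <= x -> x < y -> y <= xM -> f x < f y.
Proof.
  intros hx hxy hy. pose proof xm_pos. rewrite !phi_eq_P by lra. apply P_decreasing_mid.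
  - rewrite <- inv_xM. apply Rinv_le; lra.
  - apply Rinv_lt; lra.
  - rewrite <- inv_xm. apply Rinv_le; lra.
Qed.

Lemma phi_decreasing_right (x y : R) : xM <= x -> x < y -> f y < f x.
Proof.
  intros hx hxy. pose proof xM_pos. rewrite !phi_eq_P by lra. apply P_increasing_left.
  - apply Rinv_lt; lra.
  - rewrite <- inv_xM. apply Rinv_le; lra.
Qed.

Lemma phi_nonincreasing_left (x y : R) : 0 < x -> x <= y -> y <= xm -> f y <= f x.
Proof.
  intros hx [hxy | <-] hy; [left; apply phi_decreasing_left | right]; auto.
Qed.

Lemma phi_nondecreasing_mid (x y : R) : xm <= x -> x <= y -> y <= xM -> f x <= f y.
Proof.
  intros hx [hxy | <-] hy; [left; apply phi_increasing_mid | right]; auto.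
Qed.

Lemma phi_nonincreasing_right (x y : R) : xM <= x -> x <= y -> f y <= f x.
Proof.
  intros hx [hxy | <-]; [left; apply phi_decreasing_right | right]; auto.
Qed.

Lemma phi_continuous (x : R) : 0 < x -> continuity_pt f x.
Proof. intros hx. unfold phi. reg. apply pow_nonzero. lra. Qed.

Lemma phi_le_xM (x : R) : xm <= x -> f x <= f xM.
Proof.
  intros hx. pose proof xm_lt_xM. destruct (Rle_dec x xM).
  - apply phi_nondecreasing_mid; lra.
  - apply phi_nonincreasing_right; lra.
Qed.

Lemma phi_ge_xm_below_xM (x : R) : 0 < x -> x <= xM -> f xm <= f x.
Proof.
  intros hx hxM. pose proof xm_lt_xM. destruct (Rle_dec x xm).
  - apply phi_nonincreasing_left; lra.
  - apply phi_nondecreasing_mid; lra.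
Qed.

Lemma phi_ge_min_phi_xm (y Y : R) :
  0 < y -> y <= Y -> Rmin (f Y) (f xm) <= f y /\ (Y <= xm -> f Y <= f y).
Proof.
  intros hy hyY. pose proof xm_lt_xM.
  pose proof (Rmin_l (f Y) (f xm)). pose proof (Rmin_r (f Y) (f xm)). split.
  - destruct (Rle_dec y xM).
    + pose proof (phi_ge_xm_below_xM y hy r). lra.
    + pose proof (phi_nonincreasing_right y Y). lra.
  - intros hY. apply phi_nonincreasing_left; lra.
Qed.

Lemma phi_le_abd (x : R) : 1 <= x -> f x <= a + b + d.
Proof.
  intros hx. rewrite phi_eq_P by lra. unfold P.
  assert (0 < / x <= 1).
  { split; [apply Rinv_0_lt_compat; lra|]. rewrite <- Rinv_1. apply Rinv_le; lra. }
  set (u := / x) in *. assert (u ^ 3 <= 1) by nra. assert (c * u ^ 2 <= 0) by nra. nra.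
Qed.

Lemma phi_ge_xm_of_four_bd_le (x : R) : 4 * b * d <= c ^ 2 -> 0 < x -> f xm <= f x.
Proof.
  intros h hx. pose proof delta_pos. pose proof delta_sqr. pose proof c_add_um.
  assert (- c <= 2 * delta) by nra.
  rewrite !phi_eq_P by (lra || apply xm_pos). rewrite inv_xm.
  assert (0 < / x) by (apply Rinv_0_lt_compat; lra).
  pose proof (P_sub_P_um (/ x)). pose proof (pow2_ge_0 (/ x - um)).
  assert (0 <= delta + d * (/ x - um)) by nra. nra.
Qed.

Lemma eta_eq : - d * xm / (c * xm + 2 * d) = d / (d * um - delta).
Proof.
  pose proof xm_pos. pose proof inv_xm. pose proof c_add_um.
  assert (xm * um = 1) by (rewrite <- H0; field; lra).
  replace (c * xm + 2 * d) with (xm * (delta - d * um)) by nra.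
  destruct (Req_dec (delta - d * um) 0) as [E | E].
  - rewrite E. replace (d * um - delta) with 0 by lra.
    rewrite Rmult_0_r. unfold Rdiv. rewrite !Rinv_0. ring.
  - field. split; lra.
Qed.

(* [eta] is where the factor [delta + d (1/x - um)] of [P_sub_P_um] changes sign. *)
Lemma phi_ge_xm_below_eta (x : R) :
  c ^ 2 < 4 * b * d -> 0 < x -> x <= - d * xm / (c * xm + 2 * d) -> f xm <= f x.
Proof.
  intros h hx hxe. rewrite eta_eq in hxe.
  pose proof delta_pos. pose proof delta_sqr. pose proof c_add_um.
  assert (2 * delta < - c) by nra.
  assert (hk : 0 < d * um - delta) by nra.
  rewrite !phi_eq_P by (lra || apply xm_pos). rewrite inv_xm.
  assert (/ (d / (d * um - delta)) <= / x) by (apply Rinv_le; assumption).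
  replace (/ (d / (d * um - delta))) with (um - delta / d) in H3 by (field; split; lra).
  pose proof (P_sub_P_um (/ x)). pose proof (pow2_ge_0 (/ x - um)).
  assert (0 <= delta + d * (/ x - um)).
  { assert (d * (um - delta / d) <= d * / x) by (apply Rmult_le_compat_l; lra).
    replace (d * (um - delta / d)) with (d * um - delta) in H6 by (field; lra). lra. }
  nra.
Qed.

Lemma zeta_eq : - d * xM / (c * xM + 2 * d) = d / (delta + d * uM).
Proof.
  pose proof xM_pos. pose proof inv_xM. pose proof c_add_uM. pose proof uM_pos.
  pose proof delta_pos.
  assert (xM * uM = 1) by (rewrite <- H0; field; lra).
  replace (c * xM + 2 * d) with (- (xM * (delta + d * uM))) by nra.
  field. split; nra.
Qed.

Lemma zeta_spec :
  let zeta := - d * xM / (c * xM + 2 * d) in 0 < zeta /\ zeta < xm /\ f zeta = f xM.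
Proof.
  intros zeta. unfold zeta. rewrite zeta_eq.
  pose proof uM_pos. pose proof delta_pos. pose proof uM_lt_um. pose proof xm_pos.
  assert (hz : 0 < d / (delta + d * uM)) by (apply Rdiv_lt_0_compat; nra).
  assert (hiz : / (d / (delta + d * uM)) = uM + delta / d) by (field; split; nra).
  split; [exact hz | split].
  - assert (um < uM + delta / d).
    { pose proof um_sub_uM.
      assert (2 * delta / (3 * d) < delta / d) by (apply (Rmult_lt_reg_r (3 * d)); [lra|];
        field_simplify; lra).
      lra. }
    rewrite <- (Rinv_inv xm), inv_xm. rewrite <- (Rinv_inv (d / _)), hiz.
    apply Rinv_lt_contravar; nra.
  - rewrite !phi_eq_P by (lra || apply xM_pos). rewrite inv_xM, hiz.
    pose proof (P_sub_P_uM (uM + delta / d)) as E.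
    replace (- delta + d * (uM + delta / d - uM)) with 0 in E by (field; lra). lra.
Qed.

Hypothesis ha : 0 < a.
Hypothesis hQ : 0 < Qpoly a b d c.

Lemma phi_xM_gt_a : a < f xM.
Proof.
  rewrite phi_eq_P by apply xM_pos. rewrite inv_xM.
  replace a with (P 0) at 1 by (unfold P; ring).
  apply P_increasing_left; [apply uM_pos | lra].
Qed.

(* By [P_um_P_uM], [Q(c) > 0] forces [P um] to have the sign of [P uM = phi xM > a]. *)
Lemma phi_xm_pos : 0 < f xm.
Proof.
  pose proof P_um_P_uM. pose proof phi_xM_gt_a.
  rewrite phi_eq_P in * by (apply xM_pos || apply xm_pos). rewrite inv_xM in *. rewrite inv_xm.
  assert (0 < P um * P uM) by (assert (0 < 27 * d ^ 2) by nra; nra).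
  nra.
Qed.

Lemma phi_ge_min_a (x : R) : 0 < x -> Rmin a (f xm) <= f x.
Proof.
  intros hx. destruct (Rle_dec x xM).
  - pose proof (phi_ge_xm_below_xM x hx r). pose proof (Rmin_r a (f xm)). lra.
  - assert (a < f x).
    { rewrite phi_eq_P by lra. replace a with (P 0) at 1 by (unfold P; ring).
      apply P_increasing_left; [apply Rinv_0_lt_compat; lra|].
      rewrite <- inv_xM. apply Rinv_le; [apply xM_pos | lra]. }
    pose proof (Rmin_l a (f xm)). lra.
Qed.

Lemma min_a_phi_xm_pos : 0 < Rmin a (f xm).
Proof. pose proof phi_xm_pos. apply Rmin_pos; lra. Qed.

Lemma phi_pos (x : R) : 0 < x -> 0 < f x.
Proof. intros hx. pose proof (phi_ge_min_a x hx). pose proof min_a_phi_xm_pos. lra. Qed.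

Lemma iter_phi_pos (n : nat) (x : R) : 0 < x -> 0 < iter n f x.
Proof.
  revert x. induction n as [|n IH]; intros x hx; [exact hx|].
  unfold iter in *. simpl. apply phi_pos, IH, hx.
Qed.

Local Notation g := (fun x => f (f x)).

Lemma g_continuous (x : R) : 0 < x -> continuity_pt g x.
Proof.
  intros hx. apply (continuity_pt_comp f f x); [apply phi_continuous, hx|].
  apply phi_continuous, phi_pos, hx.
Qed.

Lemma positive_solution_pos (t : nat -> R) : positive_solution f t -> forall n, 0 < t n.
Proof.
  intros [h0 hs] n. induction n as [|n IH]; [exact h0|]. rewrite hs. apply phi_pos, IH.
Qed.

Lemma positive_solution_shift (t : nat -> R) (N : nat) :
  positive_solution f t -> positive_solution f (fun n => t (n + N)%nat).
Proof.
  intros ht. split; [apply (positive_solution_pos t ht)|]. intros n. apply ht.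
Qed.

Lemma dphi_neg (x : R) : 0 < x -> x < xm -> dphi b c d x < 0.
Proof.
  intros hx hxm. unfold dphi.
  assert (hu : um < / x) by (rewrite <- inv_xm; apply Rinv_lt; lra).
  pose proof uM_lt_um. pose proof delta_sqr.
  replace (- b / x ^ 2 - 2 * c / x ^ 3 - 3 * d / x ^ 4) with
    (- (/ x) ^ 2 * (3 * d * (/ x - um) * (/ x - uM))).
  2:{ unfold um, uM.
      replace b with ((c ^ 2 - delta * delta) / (3 * d)) by (field_simplify_eq; lra).
      field. split; lra. }
  assert (0 < / x) by (apply Rinv_0_lt_compat; lra).
  assert (0 < 3 * d * (/ x - um) * (/ x - uM)) by (apply Rmult_lt_0_compat; nra).
  assert (0 < (/ x) ^ 2) by (apply pow_lt; assumption). nra.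
Qed.

Lemma phi_schwarzian_neg (x : R) :
  0 < x -> 2 * dphi b c d x * d3phi b c d x - 3 * d2phi b c d x ^ 2 < 0.
Proof.
  intros hx. unfold dphi, d2phi, d3phi.
  replace (2 * (- b / x ^ 2 - 2 * c / x ^ 3 - 3 * d / x ^ 4)
             * (- 6 * b / x ^ 4 - 24 * c / x ^ 5 - 60 * d / x ^ 6)
           - 3 * (2 * b / x ^ 3 + 6 * c / x ^ 4 + 12 * d / x ^ 5) ^ 2)
    with (12 * (/ x) ^ 8 * (b * d - c ^ 2 - 4 * c * d * / x - 6 * d ^ 2 * (/ x) ^ 2))
    by (field; lra).
  assert (0 < / x) by (apply Rinv_0_lt_compat; lra).
  set (u := / x) in *.
  assert (0 < u ^ 8) by (apply pow_lt; assumption).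
  assert (b * d - c ^ 2 - 4 * c * d * u - 6 * d ^ 2 * u ^ 2 < 0)
    by (pose proof (pow2_ge_0 (d * u + c / 3)); nra).
  nra.
Qed.

Definition dg (x : R) : R := dphi b c d (f x) * dphi b c d x.
Definition d2g (x : R) : R :=
  d2phi b c d (f x) * (dphi b c d x * dphi b c d x) + dphi b c d (f x) * d2phi b c d x.
Definition d3g (x : R) : R :=
  d3phi b c d (f x) * dphi b c d x ^ 3 + 3 * d2phi b c d (f x) * dphi b c d x * d2phi b c d x
  + dphi b c d (f x) * d3phi b c d x.

Lemma g_derivative (x : R) : 0 < x -> derivable_pt_lim g x (dg x).
Proof.
  intros hx. unfold dg.
  apply (derivable_pt_lim_comp f f); [apply phi_derivative, hx | apply phi_derivative, phi_pos, hx].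
Qed.

Lemma dg_derivative (x : R) : 0 < x -> derivable_pt_lim dg x (d2g x).
Proof.
  intros hx. pose proof (phi_pos x hx). unfold dg, d2g.
  replace (d2phi b c d (f x) * (dphi b c d x * dphi b c d x) + dphi b c d (f x) * d2phi b c d x)
    with (d2phi b c d (f x) * dphi b c d x * dphi b c d x + dphi b c d (f x) * d2phi b c d x)
    by ring.
  apply (derivable_pt_lim_mult (fun y => dphi b c d (f y)) (dphi b c d)).
  - apply (derivable_pt_lim_comp f (dphi b c d)); [apply phi_derivative | apply dphi_derivative]; lra.
  - apply dphi_derivative, hx.
Qed.

Lemma d2g_derivative (x : R) : 0 < x -> derivable_pt_lim d2g x (d3g x).
Proof.
  intros hx. pose proof (phi_pos x hx). unfold d2g, d3g.
  replace (d3phi b c d (f x) * dphi b c d x ^ 3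
           + 3 * d2phi b c d (f x) * dphi b c d x * d2phi b c d x
           + dphi b c d (f x) * d3phi b c d x)
    with ((d3phi b c d (f x) * dphi b c d x * (dphi b c d x * dphi b c d x)
           + d2phi b c d (f x) * (d2phi b c d x * dphi b c d x + dphi b c d x * d2phi b c d x))
          + (d2phi b c d (f x) * dphi b c d x * d2phi b c d x
             + dphi b c d (f x) * d3phi b c d x)) by ring.
  apply (derivable_pt_lim_plus (fun y => _ * (dphi b c d y * dphi b c d y))
           (fun y => dphi b c d (f y) * d2phi b c d y)).
  - apply (derivable_pt_lim_mult (fun y => d2phi b c d (f y))
             (fun y => dphi b c d y * dphi b c d y)).
    + apply (derivable_pt_lim_comp f (d2phi b c d));
        [apply phi_derivative | apply d2phi_derivative]; lra.
    + apply derivable_pt_lim_mult; apply dphi_derivative, hx.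
  - apply (derivable_pt_lim_mult (fun y => dphi b c d (f y)) (d2phi b c d)).
    + apply (derivable_pt_lim_comp f (dphi b c d)); [apply phi_derivative | apply dphi_derivative]; lra.
    + apply d2phi_derivative, hx.
Qed.

Lemma g_schwarzian_neg (x : R) :
  0 < x -> x < xm -> 2 * dg x * d3g x - 3 * d2g x ^ 2 < 0.
Proof.
  intros hx hxm. unfold dg, d2g, d3g. rewrite schwarzian_num_comp.
  pose proof (phi_schwarzian_neg x hx). pose proof (phi_schwarzian_neg (f x) (phi_pos x hx)).
  pose proof (dphi_neg x hx hxm).
  assert (0 < dphi b c d x ^ 4)
    by (replace (dphi b c d x ^ 4) with ((dphi b c d x ^ 2) ^ 2) by ring; apply pow_lt; nra).
  pose proof (pow2_ge_0 (dphi b c d (f x))).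
  set (Sfx := 2 * dphi b c d (f x) * d3phi b c d (f x) - 3 * d2phi b c d (f x) ^ 2) in *.
  set (Sx := 2 * dphi b c d x * d3phi b c d x - 3 * d2phi b c d x ^ 2) in *.
  nra.
Qed.

(** * Dynamics around the equilibrium *)

Section Equilibrium.
Variable tbar : R.
Hypothesis htb : 0 < tbar.
Hypothesis hfix : f tbar = tbar.
Hypothesis huniq : forall t, 0 < t -> f t = t -> t = tbar.
Hypothesis htm : tbar < xm.

Lemma phi_gt_tbar_below (x : R) : 0 < x -> x < tbar -> tbar < f x.
Proof. intros. rewrite <- hfix at 1. apply phi_decreasing_left; lra. Qed.

Lemma phi_lt_tbar_above (x : R) : tbar < x -> x <= xm -> f x < tbar.
Proof. intros. rewrite <- hfix. apply phi_decreasing_left; lra. Qed.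

Lemma phi_xm_lt_tbar : f xm < tbar.
Proof. apply phi_lt_tbar_above; lra. Qed.

Lemma phi_lt_id_above (x : R) : tbar < x -> f x < x.
Proof.
  intros hx. apply Rnot_le_lt. intros [hlt | E]; [|pose proof (huniq x ltac:(lra) (eq_sym E)); lra].
  assert (f (x + a + b + d + 1) <= a + b + d) by (apply phi_le_abd; lra).
  destruct (fixpoint_between f x (x + a + b + d + 1)) as [z [hz hfz]]; try lra.
  - intros z hz. apply phi_continuous. lra.
  - pose proof (huniq z ltac:(lra) hfz). lra.
Qed.

Lemma g_fixpoint_2cycle (x : R) : 0 < x -> g x = x -> x <> tbar -> is_2cycle f x (f x).
Proof.
  intros hx hgx hxt. pose proof (phi_pos x hx).
  repeat split; try assumption. intros E. apply hxt, huniq; auto.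
Qed.

(* [g >= min a (phi xm) > 0], so [g] is above the diagonal near [0]; without fixed points
   it stays there. *)
Lemma g_gt_id_of_no_fixpoint (z : R) :
  (forall y, 0 < y -> y < z -> g y <> y) -> forall y, 0 < y -> y < z -> y < g y.
Proof.
  intros hz y0 h0 h1. destruct (Rlt_dec y0 (g y0)) as [| hn]; [assumption|]. exfalso.
  assert (g y0 < y0) by (pose proof (hz y0 h0 h1); lra).
  pose proof min_a_phi_xm_pos as hk. set (k := Rmin a (f xm)) in *.
  set (y1 := Rmin y0 k / 2).
  assert (hy1 : 0 < y1 /\ y1 < y0 /\ y1 < k).
  { unfold y1. pose proof (Rmin_l y0 k). pose proof (Rmin_r y0 k).
    assert (0 < Rmin y0 k) by (apply Rmin_pos; lra). lra. }
  assert (k <= g y1) by (apply phi_ge_min_a, phi_pos; lra).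
  destruct (fixpoint_between g y1 y0) as [w [hw hgw]]; try lra.
  - intros w hw. apply g_continuous. lra.
  - apply (hz w); lra.
Qed.

Lemma phi_xm_preimage (x : R) :
  0 < x -> x < tbar -> xm <= f x -> exists z, x <= z < tbar /\ f z = xm.
Proof.
  intros hx hxt hfx. destruct (Req_dec (f x) xm) as [E | E].
  { exists x. split; [lra | exact E]. }
  destruct (IVT_interv (fun y => xm - f y) x tbar) as [z [hz hfz]]; cbv beta; try lra.
  - intros y hy. apply (continuity_pt_minus (fct_cte xm) f), phi_continuous; [|lra].
    apply derivable_continuous_pt, derivable_pt_const.
  - exists z. split; [|lra]. split; [lra|]. destruct (proj2 hz) as [| ->]; [assumption|]. lra.
Qed.

Lemma converges_of_eventually_ge (t : nat -> R) (N : nat) :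
  positive_solution f t -> (forall n, (N <= n)%nat -> tbar <= t n) -> Un_cv t tbar.
Proof.
  intros ht hN. apply (CV_shift t N).
  set (u := fun n => t (n + N)%nat).
  assert (hu : forall n, tbar <= u n) by (intros; apply hN; lia).
  assert (hdec : forall n, u (S n) <= u n).
  { intros n. unfold u. simpl. destruct ht as [_ hs]. rewrite hs. specialize (hu n).
    destruct hu as [hlt | E]; [left; apply phi_lt_id_above, hlt|].
    unfold u in E. rewrite <- E, hfix. lra. }
  destruct (Un_cv_decreasing_bounded u tbar hdec hu) as [l [hl [hlb _]]].
  assert (f l = l).
  { apply (Un_cv_orbit_fixpoint f u l hl); [intros n; apply ht | apply phi_continuous; lra]. }
  replace tbar with l by (apply huniq; lra). exact hl.
Qed.

Fixpoint last_below (t : nat -> R) (n : nat) : R :=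
  match n with
  | O => t O
  | S m => if Rlt_dec (t (S m)) tbar then t (S m) else last_below t m
  end.

(* [z0] is [tbar] in part (b) and [p] in part (c). *)
Section Trapping.
Variable z0 : R.
Hypothesis hz0t : z0 <= tbar.
Hypothesis hg_gt : forall y, 0 < y -> y < z0 -> y < g y.
Hypothesis hxm_gt : forall x, 0 < x -> x < z0 -> xm <= f x -> x < f xm.

Lemma phi_maps_orbit_interval (x y : R) :
  0 < x -> x < z0 -> x <= y <= f x -> x <= f y <= f x.
Proof.
  intros hx hxz [hy1 hy2]. destruct (Rle_dec y tbar).
  - split.
    + assert (f tbar <= f y) by (apply phi_nonincreasing_left; lra). lra.
    + apply phi_nonincreasing_left; lra.
  - split; [|pose proof (phi_lt_id_above y); lra].
    destruct (phi_ge_min_phi_xm y (f x)) as [hmin hle]; try lra.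
    assert (x < g x) by (apply hg_gt; lra).
    destruct (Rle_dec (f x) xm) as [hfx | hfx]; [specialize (hle hfx); lra|].
    assert (x < f xm) by (apply hxm_gt; lra).
    unfold Rmin in hmin. destruct (Rle_dec (g x) (f xm)); lra.
Qed.

Variable t : nat -> R.
Hypothesis ht : positive_solution f t.
Hypothesis ht0 : t O < tbar.
Hypothesis hbelow : forall n, t n < tbar -> t n < z0.

Lemma orbit_trapped (j m : nat) : t j < z0 -> t j <= t (m + j)%nat <= f (t j).
Proof.
  intros hj. pose proof (positive_solution_pos t ht j).
  induction m as [|m IH].
  - simpl. assert (t j < tbar) by lra. pose proof (phi_gt_tbar_below (t j)). lra.
  - simpl. destruct ht as [_ hs]. rewrite hs. apply phi_maps_orbit_interval; auto.
Qed.

Lemma last_below_spec (n : nat) : exists j, (j <= n)%nat /\ last_below t n = t j /\ t j < tbar.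
Proof.
  induction n as [|n IH]; [exists O; auto|].
  simpl. destruct (Rlt_dec (t (S n)) tbar); [exists (S n); auto|].
  destruct IH as [j [h1 h2]]. exists j. split; [lia | exact h2].
Qed.

Lemma trapped_by_last_below (n k : nat) :
  (n <= k)%nat -> last_below t n <= t k <= f (last_below t n).
Proof.
  intros hk. destruct (last_below_spec n) as [j [hj [-> htj]]].
  replace k with ((k - j) + j)%nat by lia. apply orbit_trapped, hbelow, htj.
Qed.

Lemma last_below_eq (n : nat) : t n < tbar -> last_below t n = t n.
Proof. intros h. destruct n; [reflexivity|]. simpl. destruct (Rlt_dec (t (S n)) tbar); tauto. Qed.

Lemma last_below_increasing (n : nat) : last_below t n <= last_below t (S n).
Proof.
  simpl. destruct (Rlt_dec (t (S n)) tbar); [|lra].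
  apply (trapped_by_last_below n (S n)). lia.
Qed.

Lemma last_below_bounds (n : nat) : 0 < last_below t n < z0.
Proof.
  destruct (last_below_spec n) as [j [_ [-> htj]]].
  split; [apply (positive_solution_pos t ht) | apply hbelow, htj].
Qed.

Lemma return_below_bound (n : nat) :
  t (S n) < tbar ->
  Rmin (g (last_below t n)) (f xm) <= t (S n) /\
  (f (last_below t n) <= xm -> g (last_below t n) <= t (S n)).
Proof.
  intros hn. pose proof (positive_solution_pos t ht) as hpos. destruct ht as [_ hs].
  assert (tbar <= t n).
  { destruct (Rlt_dec (t n) tbar) as [hlt | ]; [|lra].
    rewrite hs in hn. pose proof (phi_gt_tbar_below (t n) (hpos n) hlt). lra. }
  pose proof (trapped_by_last_below n n (le_n n)).
  rewrite hs. apply phi_ge_min_phi_xm; [apply hpos | lra].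
Qed.

(* If [last_below t] had a limit [al < z0], then, since [al < g al], the returns of
   [t] below [tbar] would eventually land above [al]. *)
Lemma return_above_limit (al : R) :
  Un_cv (last_below t) al -> 0 < al -> al < z0 ->
  exists N, forall n, (N <= n)%nat -> t (S n) < tbar -> al < t (S n).
Proof.
  intros hal hal0 halz.
  assert (hgal : al < g al) by (apply hg_gt; lra).
  destruct (Un_cv_eventually_gt (fun n => g (last_below t n)) (g al) al) as [N2 hN2];
    [apply (continuity_seq (fun x => f (f x))); [apply g_continuous; lra | exact hal] | exact hgal |].
  destruct (Rle_dec xm (f al)) as [hxa | hxa].
  - assert (al < f xm) by (apply hxm_gt; lra).
    exists N2. intros n hn hSn. destruct (return_below_bound n hSn) as [hmin _].
    specialize (hN2 n hn). unfold Rmin in hmin.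
    destruct (Rle_dec (g (last_below t n)) (f xm)); lra.
  - destruct (Un_cv_eventually_lt (fun n => f (last_below t n)) (f al) xm) as [N1 hN1];
      [apply continuity_seq; [apply phi_continuous; lra | exact hal] | lra |].
    exists (max N1 N2). intros n hn hSn. destruct (return_below_bound n hSn) as [_ hle].
    specialize (hN2 n ltac:(lia)). specialize (hN1 n ltac:(lia)). simpl in hN1, hN2.
    specialize (hle ltac:(lra)). lra.
Qed.

Lemma last_below_cv : frequently_below t tbar -> Un_cv (last_below t) z0.
Proof.
  intros hinf.
  destruct (Un_cv_increasing_bounded (last_below t) z0 last_below_increasing
              (fun n => Rlt_le _ _ (proj2 (last_below_bounds n)))) as [al [hal [halz hle]]].
  destruct halz as [halz | ->]; [exfalso | exact hal].
  assert (hal0 : 0 < al) by (pose proof (hle O); pose proof (last_below_bounds O); lra).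
  destruct (return_above_limit al hal hal0 halz) as [N hN].
  destruct (hinf (S N)) as [[|n] [hn htn]]; [lia|].
  specialize (hN n ltac:(lia) htn). specialize (hle (S n)).
  rewrite (last_below_eq (S n) htn) in hle. lra.
Qed.

End Trapping.

(* Either the solution eventually stays above [tbar], or it keeps returning below it;
   then, from its first visit below [tbar] on, it lies between [last_below t] and
   [phi (last_below t)], both of which tend to [tbar]. *)
Lemma converges_of_no_2cycle :
  (forall p q, ~ is_2cycle f p q) -> forall t, positive_solution f t -> Un_cv t tbar.
Proof.
  intros hno t ht.
  assert (hg_gt : forall y, 0 < y -> y < tbar -> y < g y).
  { apply g_gt_id_of_no_fixpoint. intros y hy0 hyt E.
    apply (hno y (f y)), g_fixpoint_2cycle; lra. }
  assert (hxm_gt : forall x, 0 < x -> x < tbar -> xm <= f x -> x < f xm).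
  { intros x hx hxt hfx. destruct (phi_xm_preimage x hx hxt hfx) as [z [hz <-]].
    assert (z < g z) by (apply hg_gt; lra). lra. }
  destruct (frequently_below_or_eventually_ge t tbar) as [hinf | [N hN]];
    [| exact (converges_of_eventually_ge t N ht hN)].
  destruct (hinf O) as [N0 [_ hN0]].
  set (t' := fun n => t (n + N0)%nat).
  assert (ht' : positive_solution f t') by (apply positive_solution_shift, ht).
  assert (ht'0 : t' O < tbar) by exact hN0.
  assert (hbelow : forall n, t' n < tbar -> t' n < tbar) by auto.
  pose proof (last_below_cv tbar (Rle_refl _) hg_gt hxm_gt t' ht' ht'0 hbelow
                (frequently_below_shift t tbar N0 hinf)) as hcv.
  apply (CV_shift t N0).
  apply (Un_cv_squeeze (last_below t') t' (fun n => f (last_below t' n))); [exact hcv | |].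
  - rewrite <- hfix. apply continuity_seq; [apply phi_continuous, htb | exact hcv].
  - intros n.
    exact (trapped_by_last_below tbar (Rle_refl _) hg_gt hxm_gt t' ht' ht'0 hbelow n n (le_n n)).
Qed.

Lemma tbar_lt_g_xm : tbar < g xm.
Proof. apply phi_gt_tbar_below; [apply phi_xm_pos | apply phi_xm_lt_tbar]. Qed.

Lemma interval_invariant :
  (forall x, 0 < x -> x <= g xm -> f xm <= f x) ->
  forall x, f xm <= x <= g xm -> f xm <= f x <= g xm.
Proof.
  intros hlow x [h1 h2]. pose proof phi_xm_pos. pose proof phi_xm_lt_tbar. split.
  - apply hlow; lra.
  - destruct (Rle_dec x tbar).
    + apply phi_nonincreasing_left; lra.
    + pose proof (phi_lt_id_above x). lra.
Qed.

(* Above [tbar] a solution decreases, and it cannot stay above [g xm > tbar] forever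
   since it would then converge to [tbar]. *)
Lemma eventually_in_interval :
  4 * b * d <= c ^ 2 -> forall t, positive_solution f t ->
  exists N, forall n, (N <= n)%nat -> f xm <= t n <= g xm.
Proof.
  intros h t ht. pose proof ht as [_ hs].
  assert (hlow : forall x, 0 < x -> f xm <= f x) by (intros; apply phi_ge_xm_of_four_bd_le; auto).
  assert (hex : exists N, (1 <= N)%nat /\ t N <= g xm).
  { destruct (classic (exists N, (1 <= N)%nat /\ t N <= g xm)) as [e | e]; [exact e|].
    exfalso.
    assert (hall : forall n, (1 <= n)%nat -> g xm < t n).
    { intros n hn. apply Rnot_le_lt. intros hle. apply e. exists n. split; assumption. }
    pose proof tbar_lt_g_xm.
    assert (hcv : Un_cv t tbar).
    { apply (converges_of_eventually_ge t 1 ht). intros n hn. specialize (hall n hn). lra. }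
    assert (g xm <= tbar).
    { apply (Un_cv_ge_bound (fun n => t (n + 1)%nat)); [apply CV_shift', hcv|].
      intros n. left. apply hall. lia. }
    lra. }
  destruct hex as [N [hN1 hN2]]. exists N.
  assert (hk : forall k, f xm <= t (k + N)%nat <= g xm).
  { induction k as [|k IH].
    - simpl. split; [|exact hN2]. destruct N as [|N]; [lia|]. rewrite hs.
      apply hlow, (positive_solution_pos t ht).
    - simpl. rewrite hs. apply interval_invariant; [intros; apply hlow; lra | exact IH]. }
  intros n hn. replace n with ((n - N) + N)%nat by lia. apply hk.
Qed.

Lemma phi_preimage_tbar (y : R) :
  tbar < - d * xM / (c * xM + 2 * d) -> 0 < y -> f y = tbar -> y = tbar.
Proof.
  intros hz hy hfy. destruct zeta_spec as [hz0 [hzm hfz]].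
  destruct (Rle_dec y xm).
  - destruct (Rtotal_order y tbar) as [hlt | [E | hgt]]; [| exact E |].
    + pose proof (phi_gt_tbar_below y hy hlt). lra.
    + pose proof (phi_lt_tbar_above y hgt r). lra.
  - exfalso. pose proof (phi_le_xM y ltac:(lra)).
    assert (f (- d * xM / (c * xM + 2 * d)) < f tbar) by (apply phi_decreasing_left; lra).
    lra.
Qed.

Lemma preimage_set_trivial :
  tbar < - d * xM / (c * xM + 2 * d) -> forall t, in_preimage_set f tbar t <-> t = tbar.
Proof.
  intros hz t0. split.
  - intros [h0 [n hn]]. revert t0 h0 hn. induction n as [|n IH]; intros t0 h0 hn; [exact hn|].
    apply IH; [exact h0|]. apply phi_preimage_tbar; [exact hz | apply iter_phi_pos, h0 | exact hn].
  - intros ->. split; [exact htb|]. exists O. reflexivity.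
Qed.

(** * The 2-cycle case *)

Section TwoCycle.
Variables p q : R.
Hypothesis hcyc : is_2cycle f p q.
Hypothesis hcu : forall p' q', is_2cycle f p' q' -> (p' = p /\ q' = q) \/ (p' = q /\ q' = p).
Hypothesis hpt : p < tbar.
Hypothesis htq : tbar < q.
Hypothesis hqm : q <= xm.

Lemma p_pos : 0 < p.
Proof. apply hcyc. Qed.

Lemma phi_p : f p = q.
Proof. apply hcyc. Qed.

Lemma phi_q : f q = p.
Proof. apply hcyc. Qed.

Lemma g_fixpoints (y : R) : 0 < y -> g y = y -> y = tbar \/ y = p \/ y = q.
Proof.
  intros hy hgy. destruct (Req_dec y tbar) as [E | E]; [left; exact E | right].
  destruct (hcu y (f y) (g_fixpoint_2cycle y hy hgy E)) as [[-> _] | [-> _]]; auto.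
Qed.

Lemma phi_maps_pq (x : R) : p < x -> x < q -> p < f x < q.
Proof.
  intros. pose proof p_pos. rewrite <- phi_p, <- phi_q at 1.
  split; apply phi_decreasing_left; lra.
Qed.

Lemma g_sub_id_derivative (x : R) : 0 < x -> derivable_pt_lim (fun y => g y - y) x (dg x - 1).
Proof.
  intros hx. apply (derivable_pt_lim_minus (fun y => g y) id);
    [apply g_derivative, hx | apply derivable_pt_lim_id].
Qed.

(* On [(p, q)] both [x] and [phi x] lie left of [xm], so [g' > 0] there. *)
Lemma dg_ge_one_between (r1 r2 : R) :
  p < r1 -> r1 < r2 -> r2 < q -> dg r1 = 1 -> dg r2 = 1 -> forall x, r1 <= x <= r2 -> 1 <= dg x.
Proof.
  intros h1 h12 h2 e1 e2 x hx. pose proof p_pos.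
  replace 1 with (Rmin (dg r1) (dg r2)) by (rewrite e1, e2; apply Rmin_left; lra).
  apply (neg_schwarzian_min_at_ends dg d2g d3g); try lra.
  - intros y hy. apply dg_derivative. lra.
  - intros y hy. apply d2g_derivative. lra.
  - intros y hy. destruct (phi_maps_pq y) as [hf1 hf2]; try lra. unfold dg.
    pose proof (dphi_neg y ltac:(lra) ltac:(lra)). pose proof (dphi_neg (f y) ltac:(lra) ltac:(lra)).
    nra.
  - intros y hy. apply g_schwarzian_neg; lra.
Qed.

(* [g - id] vanishes at [p], [tbar] and [q]; the mean value theorem then gives points
   [r1 < tbar < r2] with [g' = 1]. *)
Lemma g_lt_id_between (x : R) : p < x -> x < tbar -> g x < x.
Proof.
  intros hx1 hx2. pose proof p_pos. pose proof phi_p. pose proof phi_q.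
  destruct (MVT_cor2 (fun y => g y - y) (fun y => dg y - 1) p tbar) as [r1 [e1 hr1]]; [lra| |].
  { intros y hy. apply g_sub_id_derivative. lra. }
  destruct (MVT_cor2 (fun y => g y - y) (fun y => dg y - 1) tbar q) as [r2 [e2 hr2]]; [lra| |].
  { intros y hy. apply g_sub_id_derivative. lra. }
  cbv beta in e1, e2. rewrite H0, H1, hfix in e1. rewrite H1, H0, hfix in e2.
  assert (hdg : forall y, r1 <= y <= r2 -> 1 <= dg y)
    by (apply dg_ge_one_between; try lra; nra).
  assert (hright : forall y, r1 <= y -> y < tbar -> g y < y).
  { intros y hy1 hy2.
    destruct (MVT_cor2 (fun z => g z - z) (fun z => dg z - 1) y tbar) as [xi [exi hxi]]; [lra| |].
    { intros z hz. apply g_sub_id_derivative. lra. }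
    cbv beta in exi. rewrite hfix in exi. pose proof (hdg xi ltac:(lra)).
    assert (g y <= y) by nra.
    destruct (Req_dec (g y) y) as [E | E]; [|lra].
    destruct (g_fixpoints y ltac:(lra) E) as [-> | [-> | ->]]; lra. }
  destruct (Rle_dec r1 x); [apply hright; lra|].
  destruct (Rlt_dec (g x) x) as [| hn]; [assumption|]. exfalso.
  assert (hgx : x < g x).
  { apply Rnot_le_lt. intros [hlt | E]; [lra|].
    destruct (g_fixpoints x ltac:(lra) E) as [-> | [-> | ->]]; lra. }
  destruct (fixpoint_between (fun y => g y) x r1) as [z [hz hgz]]; try lra.
  - intros z hz. apply g_continuous. lra.
  - apply hright; lra.
  - destruct (g_fixpoints z ltac:(lra) hgz) as [-> | [-> | ->]]; lra.
Qed.

Lemma g_gt_id_below_p (y : R) : 0 < y -> y < p -> y < g y.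
Proof.
  apply g_gt_id_of_no_fixpoint. intros z hz0 hz E.
  destruct (g_fixpoints z hz0 E) as [-> | [-> | ->]]; lra.
Qed.

Lemma phi_xm_gt_below_p (x : R) : 0 < x -> x < p -> xm <= f x -> x < f xm.
Proof.
  intros hx hxp hfx. pose proof p_pos.
  destruct (phi_xm_preimage x hx ltac:(lra) hfx) as [z [hz hfz]]. rewrite <- hfz.
  destruct (Rtotal_order z p) as [hzp | [-> | hzp]].
  - pose proof (g_gt_id_below_p z ltac:(lra) hzp). lra.
  - rewrite phi_p, phi_q. exact hxp.
  - assert (f z < f p) by (apply phi_decreasing_left; lra). rewrite phi_p, hfz in H0. lra.
Qed.

Lemma phi_step_low (x : R) : p <= x -> x < tbar -> tbar < f x <= q.
Proof.
  intros. pose proof p_pos. split; [apply phi_gt_tbar_below; lra|].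
  rewrite <- phi_p. apply phi_nonincreasing_left; lra.
Qed.

Lemma phi_step_high (x : R) : tbar < x -> x <= q -> p <= f x < tbar.
Proof.
  intros. split; [rewrite <- phi_q; apply phi_nonincreasing_left; lra|].
  apply phi_lt_tbar_above; lra.
Qed.

Lemma converges_2cycle_of_visit (t : nat -> R) :
  positive_solution f t -> (forall n, t n <> tbar) -> (exists n, p <= t n <= q) ->
  converges_to_2cycle t p q.
Proof.
  intros ht hne [n hn]. pose proof p_pos. pose proof ht as [_ hs].
  assert (hN : exists N, p <= t N < tbar).
  { destruct (Rtotal_order (t n) tbar) as [hlt | [E | hgt]];
      [exists n; lra | destruct (hne n E) |].
    exists (S n). rewrite hs. apply phi_step_high; lra. }
  destruct hN as [N hN].
  set (e := fun k => t (N + 2 * k)%nat).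
  assert (hes : forall k, e (S k) = g (e k)).
  { intros k. unfold e. replace (N + 2 * S k)%nat with (S (S (N + 2 * k))) by lia.
    rewrite !hs. reflexivity. }
  assert (hinv : forall k, p <= e k < tbar).
  { induction k as [|k IH]; [unfold e; rewrite Nat.add_0_r; exact hN|].
    rewrite hes. destruct (phi_step_low (e k)) as [hl1 hl2]; try lra.
    apply phi_step_high; lra. }
  assert (hdec : forall k, e (S k) <= e k).
  { intros k. rewrite hes. destruct (proj1 (hinv k)) as [hlt | <-].
    - left. apply g_lt_id_between; [exact hlt | apply hinv].
    - rewrite phi_p, phi_q. lra. }
  destruct (Un_cv_decreasing_bounded e p hdec (fun k => proj1 (hinv k))) as [L [hL [hLp hLe]]].
  assert (L = p).
  { assert (hgL : g L = L).
    { apply (Un_cv_orbit_fixpoint (fun x => g x) e L hL hes). apply g_continuous. lra. }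
    pose proof (hLe O). pose proof (hinv O).
    destruct (g_fixpoints L ltac:(lra) hgL) as [-> | [-> | ->]]; lra. }
  subst L. apply (converges_to_2cycle_of_shift t p q N hL).
  apply (Un_cv_ext (fun k => f (e k))).
  { intros k. unfold e. rewrite Nat.add_1_r. symmetry. apply hs. }
  rewrite <- phi_p. apply continuity_seq; [apply phi_continuous; lra | exact hL].
Qed.

Section Avoiding.
Variable t : nat -> R.
Hypothesis ht : positive_solution f t.
Hypothesis hout : forall n, ~ (p <= t n <= q).

Lemma avoiding_lt_p (n : nat) : t n < tbar -> t n < p.
Proof. intros h. apply Rnot_le_lt. intros hp. apply (hout n). lra. Qed.

Lemma avoiding_gt_q (n : nat) : tbar <= t n -> q < t n.
Proof. intros h. apply Rnot_le_lt. intros hq. apply (hout n). lra. Qed.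

Lemma avoiding_frequently_below : frequently_below t tbar.
Proof.
  destruct (frequently_below_or_eventually_ge t tbar) as [h | [N hN]]; [exact h|]. exfalso.
  assert (q <= tbar).
  { apply (Un_cv_ge_bound (fun n => t (n + N)%nat)).
    - apply CV_shift', (converges_of_eventually_ge t N ht hN).
    - intros n. left. apply avoiding_gt_q, hN. lia. }
  lra.
Qed.

Hypothesis ht0 : t O < tbar.

Lemma avoiding_last_below_cv : Un_cv (last_below t) p.
Proof.
  apply (last_below_cv p (Rlt_le _ _ hpt) g_gt_id_below_p phi_xm_gt_below_p t ht ht0
           avoiding_lt_p avoiding_frequently_below).
Qed.

(* Above [tbar] the solution stays below [phi (last_below t)], which tends to [q], and
   [phi] maps a neighbourhood of [q] below [tbar]. *)
Lemma avoiding_eventually_alternates :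
  exists N, forall n, (N <= n)%nat -> tbar < t n -> t (S n) < tbar.
Proof.
  pose proof p_pos. pose proof ht as [_ hs].
  destruct (continuity_pt_locally_lt f q tbar) as [e [he hloc]];
    [apply phi_continuous; lra | rewrite phi_q; exact hpt |].
  destruct (Un_cv_eventually_lt (fun n => f (last_below t n)) q (q + e)) as [N hN];
    [| lra |].
  { rewrite <- phi_p. apply continuity_seq; [apply phi_continuous; lra | apply avoiding_last_below_cv]. }
  exists N. intros n hn htn. rewrite hs. apply hloc.
  pose proof (avoiding_gt_q n ltac:(lra)). specialize (hN n hn).
  pose proof (trapped_by_last_below p (Rlt_le _ _ hpt) g_gt_id_below_p phi_xm_gt_below_p
                t ht ht0 avoiding_lt_p n n (le_n n)).
  apply Rabs_def1; lra.
Qed.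

Lemma avoiding_converges_2cycle :
  exists N, Un_cv (fun k => t (N + 2 * k)%nat) p /\ Un_cv (fun k => t (N + 2 * k + 1)%nat) q.
Proof.
  pose proof p_pos. pose proof ht as [_ hs]. pose proof (positive_solution_pos t ht) as hpos.
  destruct avoiding_eventually_alternates as [N1 halt].
  assert (hM : exists M, (N1 <= M)%nat /\ t M < tbar).
  { destruct (avoiding_frequently_below N1) as [M hM]. exists M. exact hM. }
  destruct hM as [M [hM1 hM2]].
  assert (hev : forall k, t (M + 2 * k)%nat < tbar).
  { induction k as [|k IH]; [rewrite Nat.add_0_r; exact hM2|].
    replace (M + 2 * S k)%nat with (S (S (M + 2 * k))) by lia.
    apply halt; [lia|]. rewrite hs. apply phi_gt_tbar_below; [apply hpos | exact IH]. }
  assert (hcv : Un_cv (fun k => t (M + 2 * k)%nat) p).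
  { apply (Un_cv_ext (fun k => last_below t (M + 2 * k)%nat)).
    - intros k. apply last_below_eq, hev.
    - apply Un_cv_arith_subseq, avoiding_last_below_cv. }
  exists M. split; [exact hcv|].
  apply (Un_cv_ext (fun k => f (t (M + 2 * k)%nat))).
  - intros k. rewrite Nat.add_1_r. symmetry. apply hs.
  - rewrite <- phi_p. apply continuity_seq; [apply phi_continuous; lra | exact hcv].
Qed.

End Avoiding.

Lemma converges_2cycle_of_avoid (t : nat -> R) :
  positive_solution f t -> (forall n, ~ (p <= t n <= q)) -> converges_to_2cycle t p q.
Proof.
  intros ht hout.
  destruct (avoiding_frequently_below t ht hout O) as [N0 [_ hN0]].
  set (t' := fun n => t (n + N0)%nat).
  destruct (avoiding_converges_2cycle t' (positive_solution_shift t N0 ht)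
              (fun n => hout (n + N0)%nat) hN0) as [M [hp hq]].
  apply (converges_to_2cycle_of_shift t p q (M + N0)).
  - apply (Un_cv_ext (fun k => t' (M + 2 * k)%nat)); [|exact hp]. intros k. unfold t'. f_equal. lia.
  - apply (Un_cv_ext (fun k => t' (M + 2 * k + 1)%nat)); [|exact hq]. intros k. unfold t'. f_equal. lia.
Qed.

Lemma converges_2cycle_or_tbar (t : nat -> R) :
  positive_solution f t ->
  (~ in_preimage_set f tbar (t O) -> converges_to_2cycle t p q) /\
  (in_preimage_set f tbar (t O) -> Un_cv t tbar).
Proof.
  intros ht. pose proof (positive_solution_pos t ht) as hpos. pose proof ht as [_ hs]. split.
  - intros hS. assert (hne : forall n, t n <> tbar).
    { intros n E. apply hS. split; [apply hpos|]. exists n. rewrite (positive_solution_iter f t ht). exact E. }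
    destruct (classic (exists n, p <= t n <= q)) as [h | h].
    + apply converges_2cycle_of_visit; assumption.
    + apply converges_2cycle_of_avoid; [exact ht|]. intros n hn. apply h. exists n. exact hn.
  - intros [_ [n hn]]. rewrite (positive_solution_iter f t ht) in hn.
    assert (hconst : forall m, t (m + n)%nat = tbar).
    { induction m as [|m IH]; [exact hn|]. simpl. rewrite hs, IH. exact hfix. }
    apply (converges_of_eventually_ge t n ht). intros k hk.
    replace k with ((k - n) + n)%nat by lia. rewrite hconst. lra.
Qed.
End TwoCycle.
End Equilibrium.
End Phi.

Lemma Qpoly_pos_right_of_neg_root (a b c d cm : R) :
  0 < a -> 0 < b -> 0 < d -> cm < 0 ->
  (forall y, y < 0 -> Qpoly a b d y = 0 -> y = cm) -> cm < c -> c < 0 ->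
  0 < Qpoly a b d c.
Proof.
  intros ha hb hd hcm hroot hcmc hc.
  assert (hQ0 : 0 < Qpoly a b d 0).
  { unfold Qpoly. assert (0 < a ^ 2 * d ^ 2) by (apply Rmult_lt_0_compat; apply pow_lt; lra).
    assert (0 < d * b ^ 3) by (apply Rmult_lt_0_compat; [|apply pow_lt]; lra). nra. }
  destruct (Rlt_dec 0 (Qpoly a b d c)) as [| hn]; [assumption|]. exfalso.
  destruct (Req_dec (Qpoly a b d c) 0) as [E | E]; [pose proof (hroot c hc E); lra|].
  destruct (IVT_interv (Qpoly a b d) c 0) as [y [hy hQy]]; try lra.
  - intros y hy. unfold Qpoly. reg.
  - destruct (Req_dec y 0) as [-> | hy0]; [lra|].
    pose proof (hroot y ltac:(destruct hy as [_ [? | ?]]; [lra | contradiction]) hQy). lra.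
Qed.

Theorem theorem6 (a b c d cm tbar : R) :
  0 < a -> 0 < b -> 0 < d ->
  cm < 0 -> Qpoly a b d cm = 0 ->
  (forall y, y < 0 -> Qpoly a b d y = 0 -> y = cm) ->
  cm < c -> c < - sqrt (3 * b * d) ->
  is_equilibrium (phi a b c d) tbar ->
  (forall t, is_equilibrium (phi a b c d) t -> t = tbar) ->
  tbar < x_m b c d ->
  let f := phi a b c d in
  let xm := x_m b c d in
  let xM := x_M b c d in
  let c1 := - (2 * sqrt (b * d)) in
  let eta := - d * xm / (c * xm + 2 * d) in
  let inI := fun x => f xm <= x <= iter 2 f xm in
  ((c <= c1 \/ (c1 < c /\ iter 2 f xm <= eta)) ->
     (forall x, inI x -> inI (f x))) /\
  (c <= c1 ->
     forall t : nat -> R, positive_solution f t ->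
       exists N : nat, forall n : nat, (N <= n)%nat -> inI (t n)) /\
  ((forall p q, ~ is_2cycle f p q) ->
     forall t : nat -> R, positive_solution f t -> Un_cv t tbar) /\
  (forall p q,
     is_2cycle f p q ->
     (forall p' q', is_2cycle f p' q' -> (p' = p /\ q' = q) \/ (p' = q /\ q' = p)) ->
     p < tbar -> tbar < q -> q <= xm ->
     (tbar < - d * xM / (c * xM + 2 * d) ->
        forall t, in_preimage_set f tbar t <-> t = tbar) /\
     (forall t : nat -> R, positive_solution f t ->
        (~ in_preimage_set f tbar (t O) -> converges_to_2cycle t p q) /\
        (in_preimage_set f tbar (t O) -> Un_cv t tbar))).
Proof.
  intros ha hb hd hcm _ hcmu hcmc hcs [htb hfix] huq htm f xm xM c1 eta inI.
  pose proof (sqrt_pos (3 * b * d)). pose proof (sqrt_pos (b * d)).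
  assert (sqrt (3 * b * d) * sqrt (3 * b * d) = 3 * b * d) by (apply sqrt_sqrt; nra).
  assert (sqrt (b * d) * sqrt (b * d) = b * d) by (apply sqrt_sqrt; nra).
  assert (hc : c < 0) by lra.
  assert (hc3 : 3 * b * d < c ^ 2) by nra.
  assert (hQ : 0 < Qpoly a b d c) by (apply (Qpoly_pos_right_of_neg_root a b c d cm); auto).
  assert (huniq : forall t, 0 < t -> f t = t -> t = tbar) by (intros; apply huq; split; auto).
  unfold inI, iter. simpl Nat.iter. subst f xm xM c1 eta inI.
  split; [|split; [|split]].
  - intros hH. apply (interval_invariant a b c d hb hd hc hc3 ha hQ tbar); auto.
    intros x hx hxI. destruct hH as [hH | [hH hxeta]].
    + apply phi_ge_xm_of_four_bd_le; auto. nra.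
    + apply phi_ge_xm_below_eta; auto; [nra | lra].
  - intros hH. apply (eventually_in_interval a b c d hb hd hc hc3 ha hQ tbar); auto. nra.
  - apply (converges_of_no_2cycle a b c d hb hd hc hc3 ha hQ tbar); auto.
  - intros p q hcyc hcu hpt htq hqm. split.
    + apply (preimage_set_trivial a b c d hb hd hc hc3 ha hQ tbar); auto.
    + apply (converges_2cycle_or_tbar a b c d hb hd hc hc3 ha hQ tbar); auto.
Qed.
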